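(* Let $G$ be a connected block graph on $n$ vertices with blocks $B_1,\dots,B_t$ of orders $b_1,\dots,b_t$, and equip $V(G)$ with a Hamming labelling as described in the context. Let $S\subseteq V(G)$ with $|S|=k$, $2\le k\le n$. Then $$d(S)=\sum_{i=1}^t \ell_i(S) - t,$$ where $\ell_i(S)$ is the number of distinct values taken by the $i$-th coordinates of the labels of the vertices in $S$.
   Context: A block of a graph is a maximal connected induced subgraph without cut vertices; a block graph is a graph in which every block is a clique. For connected $G$ and $S\subseteq V(G)$, the Steiner distance $d(S)$ is the minimum number of edges of a connected subgraph of $G$ whose vertex set contains $S$. $G\setminus B_i$ denotes the graph obtained from $G$ by deleting all edges of block $B_i$; each connected component of $G\setminus B_i$ contains exactly one vertex of $B_i$. Hamming labelling: for each $i\in\{1,\dots,t\}$ choose an injective map $f_i:V(B_i)\to\{0,1,\dots,b_i-1\}$; for a vertex $u\in V(G)$, its $i$-th coordinate is $f_i(w)$, where $w$ is the unique vertex of $B_i$ lying in the connected component of $G\setminus B_i$ that contains $u$. The label of $u$ is the $t$-tuple of its coordinates (this gives an isometric embedding of $G$ into $K_{b_1}\square\cdots\square K_{b_t}$). *)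

From mathcomp Require Import all_boot.
Set Implicit Arguments. Unset Strict Implicit. Unset Printing Implicit Defensive.

Section Graph.
Variables (T : finType) (e : rel T).

Definition erestr (B : {set T}) : rel T :=
  [rel x y | [&& e x y, x \in B & y \in B]].

(* the induced subgraph on B is connected (vacuous for the empty set) *)
Definition connected_on (B : {set T}) : bool :=
  [forall x in B, forall y in B, connect (erestr B) x y].

Definition nocut (B : {set T}) : bool :=
  connected_on B && [forall v in B, connected_on (B :\ v)].

Definition is_block (B : {set T}) : bool :=
  [&& B != set0, nocut B &
      [forall B' : {set T}, ((B \subset B') && nocut B') ==> (B' == B)]].

Definition blocks : {set {set T}} := [set B | is_block B].

Definition clique (B : {set T}) : Prop :=
  forall x y, x \in B -> y \in B -> x != y -> e x y.

Definition block_graph : Prop := forall B, is_block B -> clique B.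

(* G \ B : delete all edges of block B *)
Definition edel (B : {set T}) : rel T :=
  [rel x y | e x y && ~~ ((x \in B) && (y \in B))].

(* the unique vertex of B in the component of G \ B containing u *)
Definition bproj (B : {set T}) (u : T) : T :=
  odflt u [pick w in B | connect (edel B) u w].

Definition hamming_labelling (f : {set T} -> T -> nat) : Prop :=
  forall B, B \in blocks ->
    {in B &, injective (f B)} /\ (forall x, x \in B -> f B x < #|B|).

Definition coord (f : {set T} -> T -> nat) (B : {set T}) (u : T) : nat :=
  f B (bproj B u).

Definition ell (f : {set T} -> T -> nat) (B : {set T}) (S : {set T}) : nat :=
  size (undup [seq coord f B u | u <- enum S]).

Definition edge_set : {set {set T}} :=
  [set E : {set T} | [exists x, exists y, e x y && (E == [set x; y])]].

Definition conn_subgraph (W : {set T}) (F : {set {set T}}) : Prop :=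
  F \subset edge_set /\ (forall E, E \in F -> E \subset W) /\
  (forall x y, x \in W -> y \in W ->
     connect [rel a b | [set a; b] \in F] x y).

Definition steiner_dist (S : {set T}) (d : nat) : Prop :=
  (exists W F, conn_subgraph W F /\ S \subset W /\ #|F| = d) /\
  (forall W F, conn_subgraph W F -> S \subset W -> d <= #|F|).

End Graph.

From mathcomp Require Import all_boot zify.
Set Implicit Arguments. Unset Strict Implicit. Unset Printing Implicit Defensive.

(* For a block [B], the map [bproj e B] sends every vertex to the vertex of [B]
   through which it is attached, and the Hamming coordinate of [B] is [bproj e B]
   followed by an injection, so [ell e f B S] counts the projections of [S] into [B].
   Every edge lies in exactly one block.  In a connected subgraph spanning [S],
   edges outside [B] do not change projections, so its edges inside [B] connect the
   projections of [S]: there are at least [#|bproj e B @: S| - 1] of them.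
   Conversely, replacing the edges inside [B] by a star on these projections (a
   clique, since [G] is a block graph) keeps [S] connected, so a minimum subgraph
   meets all these bounds with equality; summing over the blocks gives the formula. *)

Lemma has_split_first (T : eqType) (P : pred T) (p : seq T) : has P p ->
  exists q b r, [/\ p = q ++ b :: r, P b & ~~ has P q].
Proof.
elim: p => [//|a p IH] /=; case Pa: (P a) => /=.
  by exists [::], a, p.
move=> /IH[q [b [r [-> Pb hq]]]]; exists (a :: q), b, r.
by rewrite /= Pa.
Qed.

Lemma undup_map_in (T U : eqType) (h : T -> U) (s : seq T) :
  {in s &, injective h} -> undup (map h s) = map h (undup s).
Proof.
elim: s => [//|a s IH] hinj /=.
have hinj' : {in s &, injective h} by move=> x y xs ys; apply: hinj; rewrite inE ?xs ?ys orbT.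
have [as_|as_] := boolP (a \in s); first by rewrite map_f // IH.
suff /negbTE-> : h a \notin map h s by rewrite IH.
by apply/mapP=> -[b bs hab]; move: as_; rewrite (hinj a b) ?inE ?eqxx ?bs ?orbT.
Qed.

Lemma connect_exit (T : finType) (r : rel T) (A : {set T}) x y :
  connect r x y -> x \in A -> y \notin A -> exists a b, [/\ r a b, a \in A & b \notin A].
Proof.
move=> /connectP[p pp ->]; elim: p x pp => [|c p IH] x /=; first by move=> _ ->.
move=> /andP[rxc pp] xA; have [cA|cA] := boolP (c \in A); first exact: IH.
by move=> _; exists x, c.
Qed.

Lemma connect_homo (T U : finType) (r : rel T) (r' : rel U) (g : T -> U) x y :
  (forall a b, r a b -> connect r' (g a) (g b)) -> connect r x y ->
  connect r' (g x) (g y).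
Proof.
move=> gr /connectP[p pp ->]; elim: p x pp => [|c p IH] x /=; first by rewrite connect0.
by move=> /andP[rxc pp]; apply: connect_trans (gr _ _ rxc) (IH _ pp).
Qed.

Section InducedConnectivity.
Variables (T : finType) (e : rel T).
Hypothesis e_sym : symmetric e.
Implicit Types (A X : {set T}) (x y z r u v w : T) (q l : seq T).

Lemma erestr_sym A : symmetric (erestr e A).
Proof. by move=> x y; rewrite /erestr /= e_sym; do 2!case: (_ \in A); rewrite ?andbF. Qed.

Lemma connect_erestr_sym A x y :
  connect (erestr e A) x y = connect (erestr e A) y x.
Proof. exact/sym_connect_sym/erestr_sym. Qed.

Lemma connect_erestr_sub A A' x y : A \subset A' ->
  connect (erestr e A) x y -> connect (erestr e A') x y.
Proof.
move=> sAA'; apply: connect_sub => a b /and3P[eab aA bA].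
by apply: connect1; rewrite /erestr /= eab !(subsetP sAA').
Qed.

Lemma connected_on_root A r : r \in A ->
  {in A, forall z, connect (erestr e A) z r} -> connected_on e A.
Proof.
move=> rA zr; apply/forall_inP => x xA; apply/forall_inP => y yA.
by rewrite (connect_trans (zr x xA)) // connect_erestr_sym zr.
Qed.

Lemma connected_on_connect A u v : connected_on e A -> u \in A -> v \in A ->
  connect (erestr e A) u v.
Proof. by move=> /forall_inP cA uA /(forall_inP (cA u uA)). Qed.

Lemma connected_on_setU A A' r : connected_on e A -> connected_on e A' ->
  r \in A -> r \in A' -> connected_on e (A :|: A').
Proof.
move=> cA cA' rA rA'; apply: (connected_on_root (r := r)); first by rewrite inE rA.
move=> z; rewrite inE => /orP[zA|zA'].
  by apply/(connect_erestr_sub (subsetUl A A'))/connected_on_connect.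
by apply/(connect_erestr_sub (subsetUr A A'))/connected_on_connect.
Qed.

Lemma path_connect_erestr A a l : path e a l -> {subset a :: l <= A} ->
  forall w w', w \in a :: l -> w' \in a :: l -> connect (erestr e A) w w'.
Proof.
move=> pl sub.
have pA : path (erestr e A) a l.
  apply: (@sub_in_path _ (mem A) e) pl; last by apply/allP => z /sub.
  by move=> x y xA yA exy; rewrite /erestr /= exy xA yA.
move=> w w' /(path_connect pA) aw /(path_connect pA) aw'.
by apply: connect_trans aw'; rewrite connect_erestr_sym.
Qed.

Lemma path_connect_erestr_behead A a l : path e a l -> {subset l <= A} ->
  forall w w', w \in l -> w' \in l -> connect (erestr e A) w w'.
Proof. by case: l => [//|b l] /= /andP[_]; apply: path_connect_erestr. Qed.

Section Ear.
Variables (X : {set T}) (x y : T) (q : seq T).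
Hypotheses (ncX : nocut e X) (xX : x \in X) (yX : y \in X) (xy : x != y).
Hypotheses (pq : path e x (rcons q y)) (uq : uniq q) (qX : {in q, forall w, w \notin X}).

Let cX : connected_on e X. Proof. by case/andP: ncX. Qed.
Let pxq : path e x q. Proof. by move: pq; rewrite rcons_path => /andP[]. Qed.

Lemma ear_connected : connected_on e (X :|: [set w in q]).
Proof.
apply: (connected_on_root (r := x)); first by rewrite inE xX.
move=> z; rewrite !inE => /orP[zX|zq].
  by apply/(connect_erestr_sub (subsetUl _ _))/connected_on_connect.
apply: (path_connect_erestr pxq); rewrite ?inE ?eqxx ?zq ?orbT //.
by move=> w; rewrite !inE => /orP[/eqP->|->]; rewrite ?xX ?orbT.
Qed.

Lemma ear_connected_delX v : v \in X -> connected_on e ((X :|: [set w in q]) :\ v).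
Proof.
move=> vX; set X' := _ :\ v.
have cXv : connected_on e (X :\ v) by case/andP: ncX => _ /forall_inP->.
have sXv : X :\ v \subset X' by apply/setSD/subsetUl.
have qX' w : w \in q -> w \in X'.
  by move=> wq; rewrite !inE wq orbT andbT; apply: contraNneq (qX wq) => ->.
pose r := if v == x then y else x.
have rXv : r \in X :\ v.
  by rewrite /r; case: eqP => [->|/eqP vx]; rewrite !inE ?xX ?yX ?andbT 1?eq_sym.
apply: (connected_on_root (r := r)); first exact: (subsetP sXv).
move=> z; rewrite !inE => /andP[zv /orP[zX|zq]].
  by apply/(connect_erestr_sub sXv)/(connected_on_connect cXv _ rXv); rewrite !inE zv.
rewrite /r; case: eqP => [vx|/eqP vx].
  apply: (path_connect_erestr_behead pq); rewrite ?mem_rcons ?inE ?zq ?eqxx ?orbT //.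
  move=> w; rewrite mem_rcons inE => /orP[/eqP->|/qX'//].
  by rewrite !inE yX andbT vx eq_sym.
apply: (path_connect_erestr pxq); rewrite ?inE ?zq ?eqxx ?orbT //.
by move=> w; rewrite inE => /orP[/eqP->|/qX'//]; rewrite !inE xX andbT eq_sym.
Qed.

Lemma ear_connected_delq v : v \in q -> connected_on e ((X :|: [set w in q]) :\ v).
Proof.
move=> vq; set X' := _ :\ v.
have sXv : X \subset X'.
  by apply/subsetP => w wX; rewrite !inE wX andbT; apply: contraTneq wX => ->; apply: qX.
have qX' w : w \in q -> w != v -> w \in X' by move=> wq wv; rewrite !inE wq orbT andbT.
have [q1 [q2 qE]] : exists q1 q2, q = q1 ++ v :: q2 by case/splitPr: vq => q1 q2; exists q1, q2.
move: uq pq; rewrite qE cat_uniq /= negb_or rcons_cat cat_path.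
move=> /and3P[_ /andP[vq1 _] /andP[vq2 _]] /andP[p1 /= /andP[_ p2]].
apply: (connected_on_root (r := x)); first exact: (subsetP sXv).
move=> z; rewrite !inE => /andP[zv /orP[zX|]].
  by apply/(connect_erestr_sub sXv)/connected_on_connect.
rewrite qE mem_cat inE (negbTE zv) /= => /orP[zq1|zq2].
- apply: (path_connect_erestr p1); rewrite ?inE ?zq1 ?eqxx ?orbT //.
  move=> w; rewrite inE => /orP[/eqP->|wq1]; first exact: (subsetP sXv).
  by apply: qX'; [rewrite qE mem_cat wq1 | apply: contraNneq vq1 => <-].
- apply: (@connect_trans _ _ y).
    apply: (path_connect_erestr_behead p2); rewrite ?mem_rcons ?inE ?zq2 ?eqxx ?orbT //.
    move=> w; rewrite mem_rcons inE => /orP[/eqP->|wq2]; first exact: (subsetP sXv).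
    by apply: qX'; [rewrite qE mem_cat inE wq2 !orbT | apply: contraNneq vq2 => <-].
  by rewrite connect_erestr_sym; apply/(connect_erestr_sub sXv)/connected_on_connect.
Qed.

Lemma nocut_ear : nocut e (X :|: [set w in q]).
Proof.
rewrite /nocut ear_connected; apply/forall_inP => v.
by rewrite !inE => /orP[/ear_connected_delX|/ear_connected_delq].
Qed.

End Ear.
End InducedConnectivity.

Section Blocks.
Variables (T : finType) (e : rel T).
Hypothesis e_sym : symmetric e.
Implicit Types (B C X Y : {set T}) (x y : T).

Lemma edel_sym B : symmetric (edel e B).
Proof. by move=> x y; rewrite /edel /= e_sym [(y \in B) && _]andbC. Qed.

(* A path leaving [B] and coming back without using an edge of [B] would be an ear,
   contradicting the maximality of [B]. *)
Lemma connect_edel_block_eq B x y : is_block e B -> x \in B -> y \in B ->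
  connect (edel e B) x y -> x = y.
Proof.
move=> bB xB yB /connectP[p pp yE]; subst y; apply/eqP/negPn/negP => xl.
case: (shortenP pp) xl yB => p' pp' up' _ xl yB.
have hp : has (mem B) p'.
  apply/hasP; exists (last x p') => //.
  by move: (mem_last x p'); rewrite inE eq_sym (negbTE xl).
have [q [b [r [pE /= bB' hq]]]] := has_split_first hp.
move: pp' up'; rewrite pE cat_path /= => /and3P[pxq /andP[exb nB] _].
rewrite cat_uniq /= => /andP[xp' /and3P[uq _ _]].
have pe : path e x (rcons q b).
  by rewrite rcons_path exb andbT; apply: sub_path pxq => a c /andP[].
have xb : x != b by apply: contraNneq xp' => ->; rewrite mem_cat inE eqxx orbT.
have qB w : w \in q -> w \notin B by move=> wq; apply: contra hq => wB; apply/hasP; exists w.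
case: q pxq nB pe uq qB {exb hq pE xp'} => [|w q] pxq nB pe uq qB.
  by rewrite /= xB bB' in nB.
case/and3P: bB => _ ncB /forallP /(_ (B :|: [set w0 in w :: q])).
rewrite subsetUl (nocut_ear e_sym ncB xB bB' xb pe uq qB) /= => /eqP BE.
by move: (qB w (mem_head _ _)); rewrite -BE !inE eqxx !orbT.
Qed.

Lemma nocut_setU X Y x y : nocut e X -> nocut e Y -> x \in X -> x \in Y ->
  y \in X -> y \in Y -> x != y -> nocut e (X :|: Y).
Proof.
move=> /andP[cX cXv] /andP[cY cYv] xX xY yX yY xy.
rewrite /nocut (connected_on_setU e_sym cX cY xX xY); apply/forall_inP => v _.
have cDv Z : connected_on e Z -> [forall v in Z, connected_on e (Z :\ v)] ->
    connected_on e (Z :\ v).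
  move=> cZ /forall_inP cZv; case: (boolP (v \in Z)) => [/cZv //|vZ].
  by rewrite (setDidPl _) // disjoint_sym disjoints1.
have [r rv rXY] : exists2 r, r != v & (r \in X) && (r \in Y).
  case: (eqVneq v x) => [->|vx]; first by exists y; rewrite 1?eq_sym ?yX.
  by exists x; rewrite 1?eq_sym ?xX.
case/andP: rXY => rX rY.
by rewrite setDUl; apply: (connected_on_setU e_sym (r := r)); rewrite ?cDv // !inE rv.
Qed.

Lemma block_eq_common2 B C x y : is_block e B -> is_block e C ->
  x \in B -> x \in C -> y \in B -> y \in C -> x != y -> B = C.
Proof.
move=> /and3P[_ ncB /forallP maxB] /and3P[_ ncC /forallP maxC] xB xC yB yC xy.
have ncU := nocut_setU ncB ncC xB xC yB yC xy.
move: (maxB (B :|: C)) (maxC (B :|: C)).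
rewrite subsetUl subsetUr ncU /= => /eqP UB /eqP UC.
by rewrite -[LHS]UB.
Qed.

Lemma clique_connected_on B : clique e B -> connected_on e B.
Proof.
move=> cB; apply/forall_inP => x xB; apply/forall_inP => y yB.
by case: (eqVneq x y) => [->|xy]; [apply: connect0 | apply/connect1/and3P; split; auto].
Qed.

Lemma clique_nocut B : clique e B -> nocut e B.
Proof.
move=> cB; rewrite /nocut clique_connected_on //; apply/forall_inP => v _.
by apply: clique_connected_on => a c /setD1P[_ aB] /setD1P[_ cB']; apply: cB.
Qed.

(* Grow the edge [{x, y}] to a largest 2-connected set containing it. *)
Lemma edge_in_block x y : e x y -> exists B, [/\ is_block e B, x \in B & y \in B].
Proof.
move=> exy.
have nxy : nocut e [set x; y].
  apply: clique_nocut => a c /set2P[]-> /set2P[]->; rewrite ?eqxx // => _.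
  by rewrite e_sym.
pose P B := ([set x; y] \subset B) && nocut e B.
have Pxy : P [set x; y] by rewrite /P subxx.
have [B /andP[sB nB] maxB] := arg_maxnP (fun B => #|B|) Pxy.
have [xB yB] : x \in B /\ y \in B by split; apply: (subsetP sB); rewrite !inE eqxx ?orbT.
exists B; split => //; apply/and3P; split => //; first by apply/set0Pn; exists x.
apply/forall_inP => B' /andP[sBB' nB'] /=.
by rewrite eq_sym eqEcard sBB'; apply: maxB; rewrite /P (subset_trans sB sBB').
Qed.

End Blocks.

Section Projection.
Variables (T : finType) (e : rel T).
Hypotheses (e_sym : symmetric e) (e_conn : forall x y, connect e x y).
Implicit Types (B : {set T}) (x y u w : T).

Lemma path_edel B a l w : path e a (rcons l w) -> a \notin B ->
  ~~ has (mem B) l -> path (edel e B) a (rcons l w).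
Proof.
elim: l a => [|c l IH] a /=; first by rewrite !andbT /edel /= => -> /negbTE->.
move=> /andP[eac pl] aB; rewrite negb_or => /andP[cB hl].
by rewrite IH // andbT /edel /= eac (negbTE aB).
Qed.

Lemma exists_block_edel_connect B u : is_block e B ->
  exists2 w, w \in B & connect (edel e B) u w.
Proof.
case/and3P => /set0Pn[b bB] _ _.
have [uB|uB] := boolP (u \in B); first by exists u; rewrite ?connect0.
have /connectP[p pu bE] := e_conn u b.
have hp : has (mem B) p.
  apply/hasP; exists b => //; move: (mem_last u p); rewrite -bE inE.
  by case/orP=> // /eqP bu; rewrite -bu bB in uB.
have [q [w [r [pE wB hq]]]] := has_split_first hp.
exists w => //; apply/connectP; exists (rcons q w); last by rewrite last_rcons.
apply: path_edel => //.
by move: pu; rewrite pE cat_path rcons_path /= => /and3P[-> -> _].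
Qed.

Lemma bproj_spec B u : is_block e B ->
  (bproj e B u \in B) && connect (edel e B) u (bproj e B u).
Proof.
move=> bB; rewrite /bproj; case: pickP => [//|none] /=.
by have [w wB cw] := exists_block_edel_connect u bB; move: (none w); rewrite wB cw.
Qed.

Lemma bproj_in B u : is_block e B -> bproj e B u \in B.
Proof. by move/(bproj_spec u)/andP=> []. Qed.

Lemma connect_bproj B u : is_block e B -> connect (edel e B) u (bproj e B u).
Proof. by move/(bproj_spec u)/andP=> []. Qed.

Lemma bproj_id B w : is_block e B -> w \in B -> bproj e B w = w.
Proof.
move=> bB wB; apply: (connect_edel_block_eq e_sym bB (bproj_in _ bB) wB).
by rewrite (sym_connect_sym (edel_sym e_sym B)) connect_bproj.
Qed.

Lemma bproj_eq_connect B x y : is_block e B -> connect (edel e B) x y ->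
  bproj e B x = bproj e B y.
Proof.
move=> bB cxy; apply: (connect_edel_block_eq e_sym bB (bproj_in _ bB) (bproj_in _ bB)).
apply: (@connect_trans _ _ x).
  by rewrite (sym_connect_sym (edel_sym e_sym B)) connect_bproj.
exact: connect_trans cxy (connect_bproj _ bB).
Qed.

Lemma ell_card_bproj (f : {set T} -> T -> nat) B (S : {set T}) :
  is_block e B -> {in B &, injective (f B)} -> ell e f B S = #|bproj e B @: S|.
Proof.
move=> bB finj; rewrite /ell /coord (map_comp (f B) (bproj e B)) undup_map_in; last first.
  by move=> _ _ /mapP[u _ ->] /mapP[v _ ->]; apply: finj; apply: bproj_in.
rewrite size_map -(card_uniqP (undup_uniq _)) imset_card.
by apply: eq_card => x; rewrite mem_undup.
Qed.

End Projection.



Definition pair_rel (T : finType) (F : {set {set T}}) : rel T :=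
  [rel a b | [set a; b] \in F].

Section PairGraph.
Variables (T : finType) (E : {set {set T}}).
Implicit Types (A W : {set T}) (a b x y z : T).

Lemma pair_rel_sym : symmetric (pair_rel E).
Proof. by move=> a b; rewrite /pair_rel /= setUC. Qed.

Lemma connect_pair_rel_sym x y : connect (pair_rel E) x y = connect (pair_rel E) y x.
Proof. exact/sym_connect_sym/pair_rel_sym. Qed.

(* A spanning tree of the component of [p0], grown one edge at a time. *)
Lemma grow_spanning_edges p0 k :
  k < #|[set z | connect (pair_rel E) p0 z]| ->
  exists A (D : {set {set T}}), [/\ p0 \in A, A \subset [set z | connect (pair_rel E) p0 z],
    #|A| = k.+1, D \subset E & #|D| = k /\ forall d, d \in D -> d \subset A].
Proof.
set R := [set z | _]; elim: k => [|k IH] ltkR.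
  exists [set p0], set0; rewrite set11 sub1set inE connect0 cards1 cards0 sub0set.
  by split=> //; split=> // d; rewrite inE.
have [A [D [p0A sAR cardA sDE [cardD sdA]]]] := IH (ltnW ltkR).
have [z zR zA] : exists2 z, z \in R & z \notin A.
  apply/exists_inP; apply: contraLR ltkR; rewrite negb_exists_in -leqNgt -cardA.
  by move=> /forall_inP RA; apply/subset_leq_card/subsetP => w /RA /negPn.
have p0z : connect (pair_rel E) p0 z by rewrite inE in zR.
have [a [b [ab aA bA]]] := connect_exit p0z p0A zA.
have bR : b \in R.
  by rewrite inE (connect_trans _ (connect1 ab)) //; have := subsetP sAR a aA; rewrite inE.
have abD : [set a; b] \notin D.
  by apply: contra bA => /sdA /subsetP; apply; rewrite set22.
exists (b |: A), ([set a; b] |: D); split.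
- by rewrite in_setU1 p0A orbT.
- by rewrite subUset sub1set bR.
- by rewrite cardsU1 bA cardA.
- by rewrite subUset sub1set sDE andbT.
split; first by rewrite cardsU1 abD cardD.
move=> d /setU1P[->|/sdA dA]; last exact: subset_trans dA (subsetU1 _ _).
by rewrite subUset !sub1set !inE eqxx aA !orbT.
Qed.

Lemma card_connect_pair_rel p0 : #|[set z | connect (pair_rel E) p0 z]| <= #|E| + 1.
Proof.
set R := [set z | _]; have R_gt0 : 0 < #|R| by apply/card_gt0P; exists p0; rewrite inE connect0.
have ltR : #|R|.-1 < #|R| by rewrite prednK.
have [A [D [_ _ _ sDE [cardD _]]]] := grow_spanning_edges ltR.
by rewrite -(prednK R_gt0) -cardD addn1 ltnS subset_leq_card.
Qed.
End PairGraph.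

Section Subgraphs.
Variables (T : finType) (e : rel T).
Implicit Types (W : {set T}) (F : {set {set T}}) (a b x y : T).

Definition conn_subgraphb W F :=
  [&& F \subset edge_set e, [forall E in F, E \subset W] &
      [forall x in W, forall y in W, connect (pair_rel F) x y]].

Lemma conn_subgraphP W F : reflect (conn_subgraph e W F) (conn_subgraphb W F).
Proof.
apply: (iffP and3P) => [[sF /forall_inP FW /forall_inP cW]|[sF [FW cW]]].
  by split=> //; split=> // x y /cW /forall_inP; apply.
split=> //; apply/forall_inP => // x xW; apply/forall_inP => y yW; exact: cW.
Qed.

Lemma conn_subgraph_reach F p0 : F \subset edge_set e ->
  let W := [set z | connect (pair_rel F) p0 z] in
  conn_subgraph e W [set E in F | E \subset W].
Proof.
move=> sF W; split; first by apply: subset_trans sF; apply/subsetP => E /setIdP[].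
split=> [E /setIdP[] //|].
have p0W x : x \in W -> connect (pair_rel [set E in F | E \subset W]) p0 x.
  rewrite /W inE => /connectP[p pp ->]; apply/connectP; exists p => //.
  have allW : all (mem W) (p0 :: p).
    by apply/allP => w /(path_connect pp) p0w; change (w \in W); rewrite inE.
  apply: (@sub_in_path _ (mem W) (pair_rel F)) allW pp.
  move=> a b aW bW ab; rewrite /pair_rel /= in ab *.
  by rewrite inE ab subUset !sub1set aW bW.
by move=> x y /p0W p0x /p0W; apply: connect_trans; rewrite connect_pair_rel_sym.
Qed.

Hypotheses (e_sym : symmetric e) (e_irr : irreflexive e).

Lemma edge_setP E :
  reflect (exists x y, [/\ E = [set x; y], e x y & x != y]) (E \in edge_set e).
Proof.
apply: (iffP idP) => [|[x [y [-> exy _]]]]; last first.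
  by rewrite inE; apply/existsP; exists x; apply/existsP; exists y; rewrite exy eqxx.
rewrite inE => /existsP[x /existsP[y /andP[exy /eqP ->]]].
by exists x, y; split=> //; apply: contraTneq exy => ->; rewrite e_irr.
Qed.

Lemma mem_edge_set a b : ([set a; b] \in edge_set e) = e a b.
Proof.
apply/edge_setP/idP => [[x [y [Eab exy xy]]]|eab]; last first.
  by exists a, b; split=> //; apply: contraTneq eab => ->; rewrite e_irr.
have /andP[] : (a \in [set x; y]) && (b \in [set x; y]) by rewrite -Eab set21 set22.
rewrite !inE => /orP[]/eqP ea /orP[]/eqP eb; subst a b; rewrite // 1?e_sym //.
- by move: (set22 x y); rewrite -Eab !inE orbb eq_sym (negbTE xy).
- by move: (set21 x y); rewrite -Eab !inE orbb (negbTE xy).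
Qed.
End Subgraphs.

Definition edges_in (T : finType) (F : {set {set T}}) (B : {set T}) :=
  [set E in F | E \subset B].

Section BlockGraph.
Variables (T : finType) (e : rel T).
Hypotheses (e_sym : symmetric e) (e_irr : irreflexive e).
Hypotheses (e_conn : forall x y, connect e x y) (hbg : block_graph e).
Implicit Types (B W : {set T}) (F : {set {set T}}) (a b x y : T).

Lemma edge_in_unique_block E : E \in edge_set e ->
  \sum_(B in blocks e) (E \subset B : nat) = 1.
Proof.
move=> /(edge_setP e_irr)[x [y [-> exy xy]]].
have [B0 [bB0 xB0 yB0]] := edge_in_block e_sym exy.
rewrite (bigD1 B0) ?inE //= subUset !sub1set xB0 yB0 big1 // => B /andP[].
rewrite inE subUset !sub1set => bB BB0; apply/eqP; rewrite eqb0; apply: contra BB0.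
by case/andP=> xB yB; rewrite (block_eq_common2 e_sym bB bB0 xB xB0 yB yB0 xy).
Qed.

Lemma card_edges_by_block F : F \subset edge_set e ->
  #|F| = \sum_(B in blocks e) #|edges_in F B|.
Proof.
move=> sF; rewrite -sum1_card.
under eq_bigr => E EF do rewrite -(edge_in_unique_block (subsetP sF E EF)).
rewrite exchange_big; apply: eq_bigr => B _.
rewrite -sum1_card big_mkcond [RHS]big_mkcond; apply: eq_bigr => E _.
by rewrite inE; case: (E \in F).
Qed.

Lemma edel_edge B a b : e a b -> ~~ ([set a; b] \subset B) -> edel e B a b.
Proof. by rewrite subUset !sub1set /edel /= => ->. Qed.


Section SteinerTrees.
Variables (S : {set T}) (s0 : T).
Hypothesis s0S : s0 \in S.

Lemma card_bproj_le W F B : conn_subgraph e W F -> S \subset W -> is_block e B ->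
  #|bproj e B @: S| <= #|edges_in F B| + 1.
Proof.
move=> [sF [_ cW]] SW bB.
apply: leq_trans (card_connect_pair_rel _ (bproj e B s0)).
apply/subset_leq_card/subsetP => _ /imsetP[s sS ->]; rewrite inE.
apply: connect_homo (cW _ _ (subsetP SW _ s0S) (subsetP SW _ sS)) => a b /= abF.
have [abB|abB] := boolP ([set a; b] \subset B).
  have := abB; rewrite subUset !sub1set => /andP[aB bB'].
  by rewrite !(bproj_id e_sym e_conn bB) //; apply: connect1; rewrite /pair_rel /= inE abF abB.
have eab : e a b by rewrite -(mem_edge_set e_sym e_irr) (subsetP sF).
by rewrite (bproj_eq_connect e_sym e_conn bB (connect1 (edel_edge eab abB))) connect0.
Qed.

(* Replacing the edges of [F] inside [B] by a star on the projections of [S]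
   keeps [S] connected. *)
Section Exchange.
Variables (F : {set {set T}}) (B : {set T}).
Let c := bproj e B s0.
Let Fout := F :\: edges_in F B.
Let star := [set [set c; p] | p in bproj e B @: S :\ c].

Lemma card_exchange :
  #|Fout :|: star| + #|edges_in F B| + 1 <= #|F| + #|bproj e B @: S|.
Proof.
have cS : c \in bproj e B @: S by apply: imset_f.
have cardF : #|Fout| + #|edges_in F B| = #|F|.
  by rewrite cardsD (setIidPr _) ?subnK ?subset_leq_card //; apply/subsetP => E /setIdP[].
have cardP : #|bproj e B @: S| = #|bproj e B @: S :\ c| + 1.
  by rewrite [LHS](cardsD1 c) cS addnC.
have cardstar : #|star| <= #|bproj e B @: S :\ c| by apply: leq_imset_card.
have cardU : #|Fout :|: star| <= #|Fout| + #|star| by rewrite cardsU leq_subr.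
rewrite -cardF cardP; lia.
Qed.

Hypotheses (sF : F \subset edge_set e) (bB : is_block e B).
Hypothesis s0F : forall s, s \in S -> connect (pair_rel F) s0 s.

Lemma edel_pair_rel_out : subrel (pair_rel Fout) (edel e B).
Proof.
move=> a b /setDP[abF]; rewrite inE abF /= => abB.
by rewrite edel_edge // -(mem_edge_set e_sym e_irr) (subsetP sF).
Qed.

Lemma connect_pair_rel_out x : connect (pair_rel F) s0 x ->
  connect (pair_rel Fout) s0 x ||
  connect (pair_rel Fout) s0 c && connect (pair_rel Fout) x (bproj e B x).
Proof.
move=> /connectP[p pp ->] {x}; elim/last_ind: p pp => [|p z IH] /=; first by rewrite connect0.
rewrite rcons_path last_rcons => /andP[/IH]; set x := last s0 p => IHx xzF.
have [xzB|xzB] := boolP ([set x; z] \subset B).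
  have := xzB; rewrite subUset !sub1set => /andP[xB zB].
  rewrite (bproj_id e_sym e_conn bB zB) connect0 andbT.
  case/orP: IHx => [s0x|/andP[-> _]]; last by rewrite orbT.
  have s0x' : connect (edel e B) s0 x.
    by apply: connect_sub s0x => a b /edel_pair_rel_out/connect1.
  by rewrite /c (bproj_eq_connect e_sym e_conn bB s0x') (bproj_id e_sym e_conn bB xB) s0x orbT.
have xzout : pair_rel Fout x z.
  by rewrite /pair_rel /Fout /edges_in /= !inE (xzF : [set x; z] \in F) /= xzB.
case/orP: IHx => [s0x|/andP[-> xc]]; first by rewrite (connect_trans s0x (connect1 xzout)).
rewrite (bproj_eq_connect e_sym e_conn bB (connect1 (edel_pair_rel_out xzout))) in xc.
by rewrite (connect_trans (connect1 _) xc) ?orbT // pair_rel_sym.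
Qed.

Lemma star_edges : star \subset edge_set e.
Proof.
apply/subsetP => _ /imsetP[p /setD1P[pc /imsetP[s _ ps]] ->]; subst p.
rewrite (mem_edge_set e_sym e_irr).
by apply: (hbg bB); rewrite /c 1?eq_sym ?(bproj_in e_conn _ bB).
Qed.

Lemma connect_exchange s : s \in S -> connect (pair_rel (Fout :|: star)) s0 s.
Proof.
move=> sS; have sub_out : subrel (pair_rel Fout) (pair_rel (Fout :|: star)).
  by move=> a b ab; rewrite /pair_rel /= in ab *; rewrite inE ab.
have lift := connect_sub (fun a b ab => connect1 (sub_out a b ab)).
case/orP: (connect_pair_rel_out (s0F sS)) => [/lift //|/andP[/lift s0c /lift sp]].
apply: connect_trans s0c (connect_trans _ (_ : connect _ (bproj e B s) s)).
  have [->|ne] := eqVneq (bproj e B s) c; first exact: connect0.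
  apply: connect1; rewrite /pair_rel /= inE; apply/orP; right.
  by apply: imset_f; rewrite !inE ne imset_f.
by rewrite connect_pair_rel_sym.
Qed.

End Exchange.

Lemma exchange_block W F B : conn_subgraph e W F -> S \subset W -> is_block e B ->
  exists W' F', [/\ conn_subgraph e W' F', S \subset W' &
    #|F'| + #|edges_in F B| + 1 <= #|F| + #|bproj e B @: S|].
Proof.
move=> [sF [_ cW]] SW bB.
have s0F s : s \in S -> connect (pair_rel F) s0 s by move=> sS; apply: cW; apply: (subsetP SW).
pose F1 := (F :\: edges_in F B) :|:
  [set [set bproj e B s0; p] | p in bproj e B @: S :\ bproj e B s0].
have sF1 : F1 \subset edge_set e.
  by rewrite subUset (star_edges bB) andbT; apply: subset_trans (subsetDl _ _) sF.
exists [set z | connect (pair_rel F1) s0 z],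
  [set E in F1 | E \subset [set z | connect (pair_rel F1) s0 z]].
split; first exact: conn_subgraph_reach.
  by apply/subsetP => s sS; rewrite inE (connect_exchange sF bB s0F sS).
apply: (leq_trans _ (card_exchange F B)); rewrite !leq_add2r.
by apply/subset_leq_card/subsetP => E /setIdP[].
Qed.

Lemma sum_card_bproj_le W F : conn_subgraph e W F -> S \subset W ->
  \sum_(B in blocks e) #|bproj e B @: S| <= #|F| + #|blocks e|.
Proof.
move=> cWF SW; have [sF _] := cWF.
rewrite (card_edges_by_block sF) -sum1_card -big_split /=.
by apply: leq_sum => B; rewrite inE => bB; apply: card_bproj_le cWF SW bB.
Qed.

(* A Steiner tree uses exactly [#|bproj e B @: S| - 1] edges inside every block [B]. *)
Lemma card_min_conn_subgraph W F : conn_subgraph e W F -> S \subset W ->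
  (forall W' F', conn_subgraph e W' F' -> S \subset W' -> #|F| <= #|F'|) ->
  #|F| + #|blocks e| = \sum_(B in blocks e) #|bproj e B @: S|.
Proof.
move=> cWF SW minF; apply/eqP; rewrite eqn_leq (sum_card_bproj_le cWF SW) andbT.
have [sF _] := cWF; rewrite (card_edges_by_block sF) -sum1_card -big_split /=.
apply: leq_sum => B; rewrite inE => bB.
have [W' [F' [cWF' SW' leF']]] := exchange_block cWF SW bB.
rewrite -(leq_add2l #|F'|) addnA (leq_trans leF') // leq_add2r.
exact: minF cWF' SW'.
Qed.

End SteinerTrees.

Lemma conn_subgraph_full : conn_subgraph e setT (edge_set e).
Proof.
split=> //; split=> [E _|x y _ _]; first exact: subsetT.
apply: connect_sub (e_conn x y) => a b eab.
by apply: connect1; rewrite /= (mem_edge_set e_sym e_irr).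
Qed.

Lemma exists_min_conn_subgraph (S : {set T}) : exists W F,
  [/\ conn_subgraph e W F, S \subset W &
      forall W' F', conn_subgraph e W' F' -> S \subset W' -> #|F| <= #|F'|].
Proof.
pose P (WF : {set T} * {set {set T}}) := conn_subgraphb e WF.1 WF.2 && (S \subset WF.1).
have PT : P (setT, edge_set e).
  by rewrite /P subsetT andbT; apply/conn_subgraphP/conn_subgraph_full.
case: (arg_minnP (fun WF : {set T} * {set {set T}} => #|WF.2|) PT).
move=> -[W F] /andP[/conn_subgraphP cWF SW] minF.
exists W, F; split=> // W' F' cWF' SW'.
by apply: (minF (W', F')); rewrite /P SW' andbT; apply/conn_subgraphP.
Qed.
End BlockGraph.

Theorem theorem2 (T : finType) (e : rel T)
  (e_sym : symmetric e) (e_irr : irreflexive e)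
  (e_conn : forall x y, connect e x y)
  (hbg : block_graph e)
  (f : {set T} -> T -> nat) (hf : hamming_labelling e f)
  (S : {set T}) (hS : 2 <= #|S|) :
  steiner_dist e S ((\sum_(B in blocks e) ell e f B S) - #|blocks e|).
Proof.
have [s0 s0S] : exists s0, s0 \in S by apply/set0Pn; rewrite -card_gt0 (leq_trans _ hS).
have [W [F [cWF SW minF]]] := exists_min_conn_subgraph e_sym e_irr e_conn S.
have cardF := card_min_conn_subgraph e_sym e_irr e_conn hbg s0S cWF SW minF.
have -> : \sum_(B in blocks e) ell e f B S = \sum_(B in blocks e) #|bproj e B @: S|.
  apply: eq_bigr => B Bb; have [finj _] := hf B Bb.
  by apply: ell_card_bproj; rewrite // inE in Bb.
by rewrite -cardF addnK; split; [exists W, F | apply: minF].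
Qed.
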